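(* In the persuasion setting of the context, if the channel capacity is zero, $C(Q)=0$, then for all positive integers $k,n$, $$U^*_S(\mu^n,Q^k)=V\Big(\mu,\tfrac{k}{n}C(Q)\Big)=u^*_S(\mu).$$
   Context: For a finite set $S$, $\Delta(S)$ denotes the set of probability distributions on $S$. Let $\Omega$ be a finite set of states with prior $\mu\in\Delta(\Omega)$, $A$ a finite set of actions, $u_S,u_R:\Omega\times A\to\mathbb{R}$ payoffs of sender and receiver. A channel $(X,Y,Q)$: finite sets $X,Y$ and $Q:X\to\Delta(Y)$. For positive integers $n,k$: a sender strategy is $\sigma:\Omega^n\to\Delta(X^k)$; $\omega^n$ drawn i.i.d. from $\mu$ ($\mu^n(\omega^n)=\prod_t\mu(\omega_t)$), $x^k$ with probability $\sigma(x^k|\omega^n)$, $y^k$ with probability $Q^k(y^k|x^k)=\prod_tQ(y_t|x_t)$, observed by the receiver; a receiver strategy is $\tau:Y^k\to A^n$. Payoffs $\bar u_i(\omega^n,a^n)=\frac1n\sum_tu_i(\omega_t,a_t)$. $BR(\sigma)$: strategies $\tau$ such that for each $y^k$, $\tau(y^k)$ maximizes $\sum_{\omega^n,x^k}\mu^n(\omega^n)\sigma(x^k|\omega^n)Q^k(y^k|x^k)\bar u_R(\omega^n,a^n)$ over $a^n$. $U^*_S(\mu^n,Q^k)=\sup_\sigma\min_{\tau\in BR(\sigma)}\sum_{\omega^n,x^k,y^k}\mu^n(\omega^n)\sigma(x^k|\omega^n)Q^k(y^k|x^k)\bar u_S(\omega^n,\tau(y^k))$. $A^*(\nu)=\arg\max_a\sum_\omega\nu(\omega)u_R(\omega,a)$,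 $u^*_S(\nu)=\min_{a\in A^*(\nu)}\sum_\omega\nu(\omega)u_S(\omega,a)$. $H(q)=-\sum_sq(s)\log_2q(s)$. Capacity $C(Q)=\max_{p\in\Delta(X)}\big[H(\sum_xp(x)Q(\cdot|x))-\sum_xp(x)H(Q(\cdot|x))\big]$. A splitting of $\mu$: finite family $(\lambda_m,\nu_m)_m$, $\nu_m\in\Delta(\Omega)$, $\lambda_m\ge0$, $\sum\lambda_m=1$, $\sum\lambda_m\nu_m=\mu$. $V(\mu,c)=\sup\{\sum_m\lambda_mu^*_S(\nu_m):\text{splitting of }\mu,\ H(\mu)-\sum_m\lambda_mH(\nu_m)\le c\}$. *)

From mathcomp Require Import all_boot all_order all_algebra.
From mathcomp Require Import all_classical all_reals all_analysis.
Set Implicit Arguments. Unset Strict Implicit. Unset Printing Implicit Defensive.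
Import Order.TTheory GRing.Theory Num.Theory.
Local Open Scope classical_set_scope.
Local Open Scope ring_scope.

Section Defs.
Variable R : realType.

Definition is_dist (T : finType) (p : T -> R) : Prop :=
  (forall t, 0 <= p t) /\ \sum_(t : T) p t = 1.

Definition log2 (x : R) : R := ln x / ln 2.
Definition entropy (T : finType) (q : T -> R) : R :=
  - \sum_(s : T) (if q s == 0 then 0 else q s * log2 (q s)).

Definition capacity (X Y : finType) (Q : X -> Y -> R) : R :=
  sup [set v | exists p : X -> R, is_dist p /\
     v = entropy (fun y => \sum_(x : X) p x * Q x y)
         - \sum_(x : X) p x * entropy (Q x)].

Variables (Om A : finType) (uS uR : Om -> A -> R).

Definition expu (u : Om -> A -> R) (nu : Om -> R) (a : A) : R :=
  \sum_(w : Om) nu w * u w a.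
Definition Astar (nu : Om -> R) (a : A) : Prop :=
  forall a' : A, expu uR nu a' <= expu uR nu a.
Definition uSstar (nu : Om -> R) : R :=
  inf [set v | exists a, Astar nu a /\ v = expu uS nu a].

Definition is_splitting (mu : Om -> R) (m : nat) (lam : 'I_m -> R)
    (nu : 'I_m -> Om -> R) : Prop :=
  (forall i, 0 <= lam i) /\ \sum_(i < m) lam i = 1 /\
  (forall i, is_dist (nu i)) /\
  (forall w, \sum_(i < m) lam i * nu i w = mu w).

Definition Vval (mu : Om -> R) (c : R) : R :=
  sup [set v | exists m (lam : 'I_m -> R) (nu : 'I_m -> Om -> R),
     is_splitting mu lam nu /\
     entropy mu - \sum_(i < m) lam i * entropy (nu i) <= c /\
     v = \sum_(i < m) lam i * uSstar (nu i)].

(* n uses of the source, k uses of the channel *)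
Variables (X Y : finType) (Q : X -> Y -> R) (mu : Om -> R) (n k : nat).

Definition mun (w : {ffun 'I_n -> Om}) : R := \prod_(t < n) mu (w t).
Definition Qk (x : {ffun 'I_k -> X}) (y : {ffun 'I_k -> Y}) : R :=
  \prod_(t < k) Q (x t) (y t).
Definition ubar (u : Om -> A -> R) (w : {ffun 'I_n -> Om})
    (a : {ffun 'I_n -> A}) : R :=
  n%:R^-1 * \sum_(t < n) u (w t) (a t).

Definition sender_strategy
    (sigma : {ffun 'I_n -> Om} -> {ffun 'I_k -> X} -> R) : Prop :=
  forall w, is_dist (sigma w).

(* receiver's (unnormalized) expected payoff of a^n after observing y^k *)
Definition recv_obj (sigma : {ffun 'I_n -> Om} -> {ffun 'I_k -> X} -> R)
    (y : {ffun 'I_k -> Y}) (a : {ffun 'I_n -> A}) : R :=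
  \sum_(w : {ffun 'I_n -> Om}) \sum_(x : {ffun 'I_k -> X})
     mun w * sigma w x * Qk x y * ubar uR w a.

Definition BR (sigma : {ffun 'I_n -> Om} -> {ffun 'I_k -> X} -> R)
    (tau : {ffun 'I_k -> Y} -> {ffun 'I_n -> A}) : Prop :=
  forall y a', recv_obj sigma y a' <= recv_obj sigma y (tau y).

Definition sender_payoff (sigma : {ffun 'I_n -> Om} -> {ffun 'I_k -> X} -> R)
    (tau : {ffun 'I_k -> Y} -> {ffun 'I_n -> A}) : R :=
  \sum_(w : {ffun 'I_n -> Om}) \sum_(x : {ffun 'I_k -> X})
    \sum_(y : {ffun 'I_k -> Y}) mun w * sigma w x * Qk x y * ubar uS w (tau y).

Definition UstarS : R :=
  sup [set v | exists sigma, sender_strategy sigma /\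
     v = inf [set z | exists tau, BR sigma tau /\ z = sender_payoff sigma tau]].

End Defs.

(* A channel of zero capacity has all its rows equal: the mutual information
   of the input distribution uniform on {x1, x2} is a Jensen gap of the
   strictly convex function t ln t, which vanishes only if Q x1 = Q x2.  The
   receiver's observation is then independent of the state, so at every
   output of positive probability a best response plays an action of A*(mu)
   in each coordinate, and whatever the sender does she gets exactly
   u*_S(mu).  In the same way a splitting of mu with no information gain has
   every posterior (of positive weight) equal to mu, so V(mu, 0) = u*_S(mu). *)

From mathcomp Require Import all_boot all_order all_algebra.
From mathcomp Require Import all_classical all_reals all_analysis.
From mathcomp Require Import ring lra.
Import Order.TTheory GRing.Theory Num.Theory.
Set Implicit Arguments. Unset Strict Implicit. Unset Printing Implicit Defensive.
Local Open Scope classical_set_scope.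
Local Open Scope ring_scope.

Section Xlnx.
Variable R : realType.

Definition xlnx (t : R) : R := if t == 0 then 0 else t * ln t.

Lemma ln_lt_subr1 (x : R) : 0 < x -> x != 1 -> ln x < x - 1.
Proof.
move=> x_gt0 x_neq1.
have lnx_neq0 : ln x != 0 by rewrite ln_eq0.
by have := expR_gt1Dx lnx_neq0; rewrite lnK ?posrE // ltrBrDr addrC.
Qed.

Lemma xlnx_le0 (t : R) : 0 <= t -> t <= 1 -> xlnx t <= 0.
Proof.
by move=> t_ge0 t_le1; rewrite /xlnx; case: eqP => // _; rewrite mulr_ge0_le0 ?ln_le0.
Qed.

Lemma xlnx_tangent_lt (M t : R) : 0 < M -> 0 <= t -> t != M ->
  xlnx M + (ln M + 1) * (t - M) < xlnx t.
Proof.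
move=> M_gt0 t_ge0 t_neqM; rewrite /xlnx (gt_eqF M_gt0).
have [->|t_neq0] := eqVneq t 0.
  by rewrite (_ : _ + _ = - M); [rewrite oppr_lt0 | ring].
have t_gt0 : 0 < t by rewrite lt_def t_neq0.
have Mt_neq1 : M / t != 1.
  by apply: contra t_neqM => /eqP/divr1_eq ->.
have := ln_lt_subr1 (divr_gt0 M_gt0 t_gt0) Mt_neq1.
rewrite ln_div ?posrE // -(ltr_pM2l t_gt0).
have -> : t * (M / t - 1) = M - t by rewrite mulrBr mulrCA divff ?(gt_eqF t_gt0) // !mulr1.
have -> : M * ln M + (ln M + 1) * (t - M) = t * ln M - (M - t) by ring.
by rewrite ltrBlDr -ltrBlDl -mulrBr.
Qed.

Lemma xlnx_tangent_le (M t : R) : 0 < M -> 0 <= t ->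
  xlnx M + (ln M + 1) * (t - M) <= xlnx t.
Proof.
move=> M_gt0 t_ge0; have [->|t_neqM] := eqVneq t M; first by rewrite subrr mulr0 addr0.
exact/ltW/xlnx_tangent_lt.
Qed.

Lemma xlnx_ge_subr1 (t : R) : 0 <= t -> t - 1 <= xlnx t.
Proof.
by move=> t_ge0; have := xlnx_tangent_le ltr01 t_ge0; rewrite /xlnx oner_eq0 ln1 mulr0; lra.
Qed.

End Xlnx.

Section XlnxJensen.
Variables (R : realType) (I : finType) (lam t : I -> R).
Hypotheses (lam_ge0 : forall i, 0 <= lam i) (lam_sum1 : \sum_i lam i = 1)
  (t_ge0 : forall i, 0 <= t i).

Let M : R := \sum_i lam i * t i.
Let gap i : R := xlnx (t i) - xlnx M - (ln M + 1) * (t i - M).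

Lemma xlnx_jensen_gapE :
  \sum_i lam i * xlnx (t i) - xlnx M = \sum_i lam i * gap i.
Proof.
have -> : \sum_i lam i * gap i = \sum_i lam i * xlnx (t i)
    - (\sum_i lam i) * xlnx M - (ln M + 1) * (M - (\sum_i lam i) * M).
  rewrite !mulr_suml -[X in _ * X]sumrB mulr_sumr -!sumrB.
  by apply: eq_bigr => i _; rewrite /gap; ring.
by rewrite lam_sum1 !mul1r subrr mulr0 subr0.
Qed.

Lemma xlnx_jensen_gap_gt0 i : lam i != 0 -> t i != M -> 0 < lam i * gap i.
Proof.
move=> lam_neq0 t_neqM.
have M_gt0 : 0 < M.
  rewrite lt_def sumr_ge0 ?andbT => [|j _]; last exact: mulr_ge0.
  apply: contra t_neqM => /eqP M0; rewrite M0.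
  have /eqP := psumr_eq0P (i := i) (fun j _ => mulr_ge0 (lam_ge0 j) (t_ge0 j)) M0 isT.
  by rewrite mulf_eq0 (negbTE lam_neq0).
rewrite pmulr_rgt0 /gap; last by rewrite lt_def lam_neq0 lam_ge0.
rewrite -addrA -opprD subr_gt0.
exact: xlnx_tangent_lt.
Qed.

Lemma xlnx_jensen_gap_ge0 i : 0 <= lam i * gap i.
Proof.
have [t_eqM|t_neqM] := eqVneq (t i) M.
  by rewrite /gap t_eqM !subrr mulr0 subrr mulr0.
have [->|lam_neq0] := eqVneq (lam i) 0; first by rewrite mul0r.
exact/ltW/xlnx_jensen_gap_gt0.
Qed.

Lemma xlnx_jensen : xlnx M <= \sum_i lam i * xlnx (t i).
Proof.
by rewrite -subr_ge0 xlnx_jensen_gapE sumr_ge0 // => i _; exact: xlnx_jensen_gap_ge0.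
Qed.

Lemma xlnx_jensen_eq : \sum_i lam i * xlnx (t i) <= xlnx M ->
  forall i, lam i != 0 -> t i = M.
Proof.
rewrite -subr_le0 xlnx_jensen_gapE => gap_le0 i lam_neq0.
have gap_eq0 : \sum_i lam i * gap i = 0.
  by apply/eqP; rewrite eq_le gap_le0 sumr_ge0 // => j _; exact: xlnx_jensen_gap_ge0.
apply/eqP; apply: contraT => t_neqM.
have := xlnx_jensen_gap_gt0 lam_neq0 t_neqM.
by rewrite (psumr_eq0P (fun j _ => xlnx_jensen_gap_ge0 j) gap_eq0) ?ltxx.
Qed.

End XlnxJensen.

Section EntropyMixture.
Variable R : realType.

Lemma ln2_gt0 : 0 < ln (2 : R).
Proof. by rewrite ln_gt0 // ltr1n. Qed.

Lemma entropyE (T : finType) (q : T -> R) :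
  entropy q = - (\sum_s xlnx (q s)) / ln 2.
Proof.
rewrite /entropy /log2 mulNr mulr_suml; congr (- _); apply: eq_bigr => s _.
by rewrite /xlnx; case: eqP => _; rewrite ?mul0r ?mulrA.
Qed.

Lemma dist_le1 (T : finType) (q : T -> R) s : is_dist q -> q s <= 1.
Proof. by case=> q_ge0 <-; rewrite (bigD1 s) //= lerDl sumr_ge0. Qed.

Variables (I T : finType) (lam : I -> R) (nu : I -> T -> R).

Let mix w : R := \sum_i lam i * nu i w.

Lemma entropy_mixture_gapE :
  entropy mix - \sum_i lam i * entropy (nu i) =
  (\sum_w (\sum_i lam i * xlnx (nu i w) - xlnx (mix w))) / ln 2.
Proof.
rewrite entropyE (eq_bigr _ (fun i _ => congr1 _ (entropyE (nu i)))).
rewrite sumrB exchange_big /= mulrBl addrC mulNr; congr (_ - _).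
rewrite mulr_suml -sumrN; apply: eq_bigr => i _.
by rewrite mulNr mulrN opprK mulrA mulr_sumr.
Qed.

Hypothesis lam_ge0 : forall i, 0 <= lam i.

Lemma entropy_mixture_gap_le :
  (forall i, is_dist (nu i)) ->
  entropy mix - \sum_i lam i * entropy (nu i) <= #|T|%:R / ln 2.
Proof.
move=> nu_dist; rewrite entropy_mixture_gapE ler_pM2r ?invr_gt0 ?ln2_gt0 //.
rewrite -sum1_card natr_sum ler_sum // => w _.
have mix_ge0 : 0 <= mix w.
  by rewrite sumr_ge0 // => i _; rewrite mulr_ge0 //; case: (nu_dist i).
have : \sum_i lam i * xlnx (nu i w) <= 0.
  rewrite sumr_le0 // => i _; rewrite mulr_ge0_le0 // xlnx_le0 ?dist_le1 //.
  by case: (nu_dist i).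
have := xlnx_ge_subr1 mix_ge0; lra.
Qed.

Hypothesis lam_sum1 : \sum_i lam i = 1.

Lemma entropy_mixture_gap_le0 :
  (forall i w, 0 <= nu i w) ->
  entropy mix - \sum_i lam i * entropy (nu i) <= 0 ->
  forall i w, lam i != 0 -> nu i w = mix w.
Proof.
move=> nu_ge0; rewrite entropy_mixture_gapE pmulr_lle0 ?invr_gt0 ?ln2_gt0 //.
move=> gap_le0 i w lam_neq0.
have term_ge0 w' : 0 <= \sum_i lam i * xlnx (nu i w') - xlnx (mix w').
  by rewrite subr_ge0 xlnx_jensen.
have gap_eq0 : \sum_w (\sum_i lam i * xlnx (nu i w) - xlnx (mix w)) = 0.
  by apply/eqP; rewrite eq_le gap_le0 sumr_ge0.
have /eqP := psumr_eq0P (i := w) (fun w' _ => term_ge0 w') gap_eq0 isT.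
rewrite subr_eq0 => /eqP eq_mix.
by apply: (xlnx_jensen_eq lam_ge0 lam_sum1) => //; rewrite eq_mix.
Qed.

End EntropyMixture.

Section ZeroCapacity.
Variable R : realType.

Lemma sum_indicator1 (T : finType) (t0 : T) : \sum_(t : T) ((t == t0)%:R : R) = 1.
Proof. by rewrite (bigD1 t0) //= eqxx big1 ?addr0 // => t /negbTE ->. Qed.

Lemma capacity_eq0_const (X Y : finType) (Q : X -> Y -> R) :
  (forall x, is_dist (Q x)) -> capacity Q = 0 -> forall x1 x2 y, Q x1 y = Q x2 y.
Proof.
move=> Q_dist capQ0 x1 x2 y.
pose p x : R := ((x == x1)%:R + (x == x2)%:R) / 2.
have p_dist : is_dist p.
  split=> [x|]; first by rewrite divr_ge0 ?addr_ge0 ?ler0n.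
  by rewrite -mulr_suml big_split /= !sum_indicator1 divff.
have p_neq0 x : x = x1 \/ x = x2 -> p x != 0.
  move=> x12; rewrite gt_eqF // /p.
  have := ler0n R (x1 == x2); have := ler0n R (x2 == x1).
  by case: x12 => ->; rewrite eqxx /=; lra.
pose S := [set v | exists p : X -> R, is_dist p /\
  v = entropy (fun y => \sum_x p x * Q x y) - \sum_x p x * entropy (Q x)].
have S_sup : has_sup S.
  split.
    by exists (entropy (fun y => \sum_x p x * Q x y) - \sum_x p x * entropy (Q x)), p.
  exists (#|Y|%:R / ln 2) => _ [p' [[p'_ge0 _] ->]].
  exact: entropy_mixture_gap_le p'_ge0 Q_dist.
have gap_le0 : entropy (fun y => \sum_x p x * Q x y) - \sum_x p x * entropy (Q x) <= 0.
  by rewrite -[leRHS]capQ0; apply: sup_upper_bound => //; exists p.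
have Q_ge0 x y' : 0 <= Q x y' by case: (Q_dist x).
have [p_ge0 p_sum1] := p_dist.
have Q_eq_mix x : x = x1 \/ x = x2 -> Q x y = \sum_x p x * Q x y.
  by move=> x12; apply: (entropy_mixture_gap_le0 p_ge0 p_sum1 Q_ge0 gap_le0); exact: p_neq0.
by rewrite (Q_eq_mix x1) ?(Q_eq_mix x2); auto.
Qed.

Lemma Vval0 (Om A : finType) (uS uR : Om -> A -> R) (mu : Om -> R) :
  is_dist mu -> Vval uS uR mu 0 = uSstar uS uR mu.
Proof.
move=> mu_dist; rewrite /Vval [X in sup X](_ : _ = [set uSstar uS uR mu]) ?sup1 //.
apply/seteqP; split=> [|_ ->] /=.
  move=> _ [m [lam [nu [[lam_ge0 [lam_sum1 [nu_dist mix_mu]]] [gap_le0 ->]]]]] /=.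
  have nu_ge0 i w : 0 <= nu i w by case: (nu_dist i).
  rewrite -(funext mix_mu) in gap_le0.
  have nu_mu i : lam i != 0 -> nu i = mu.
    move=> lam_neq0; apply/funext => w; rewrite -mix_mu.
    exact: (entropy_mixture_gap_le0 lam_ge0 lam_sum1 nu_ge0 gap_le0).
  rewrite -[RHS]mul1r -lam_sum1 mulr_suml; apply: eq_bigr => i _.
  by have [->|/nu_mu ->] := eqVneq (lam i) 0; rewrite ?mul0r.
exists 1%N, (fun _ => 1), (fun _ => mu).
rewrite big_ord1 mul1r subrr big_ord1 mul1r; split; last by split.
split=> [_|]; first exact: ler01.
by rewrite big_ord1; split=> //; split=> [_ //|w]; rewrite big_ord1 mul1r.
Qed.

End ZeroCapacity.

Section ProductDistribution.
Variables (R : realType) (T : finType) (m : nat) (p : T -> R).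
Hypothesis p_sum1 : \sum_o p o = 1.

Lemma sum_prod_ffun : \sum_(w : {ffun 'I_m -> T}) \prod_t p (w t) = 1.
Proof. by rewrite -(bigA_distr_bigA (fun _ o => p o)) big1. Qed.

Lemma sum_prod_ffun_coord (s : 'I_m) (g : T -> R) :
  \sum_(w : {ffun 'I_m -> T}) (\prod_t p (w t)) * g (w s) = \sum_o p o * g o.
Proof.
pose F t o := if t == s then p o * g o else p o.
transitivity (\sum_(w : {ffun 'I_m -> T}) \prod_t F t (w t)).
  apply: eq_bigr => w _; rewrite (bigD1 s) //= [RHS](bigD1 s) //= /F eqxx mulrAC.
  by congr (_ * _); apply: eq_bigr => t t_neq_s; rewrite (negbTE t_neq_s).
rewrite -bigA_distr_bigA (bigD1 s) //= [X in _ * X]big1 ?mulr1 /F ?eqxx //.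
by move=> t t_neq_s; rewrite (negbTE t_neq_s).
Qed.

End ProductDistribution.

Lemma inf_eq_min (R : realType) (S : set R) x : S x -> lbound S x -> inf S = x.
Proof.
move=> Sx Sx_lb; apply/eqP; rewrite eq_le lb_le_inf ?andbT; last by [].
  by apply: ge_inf => //; exists x.
by exists x.
Qed.

Section OptimalReceiverAction.
Variables (R : realType) (Om A : finType) (uS uR : Om -> A -> R) (a0 : A).

Lemma uSstar_attained (nu : Om -> R) : exists a, [/\ Astar uR nu a,
  forall b, Astar uR nu b -> expu uS nu a <= expu uS nu b &
  uSstar uS uR nu = expu uS nu a].
Proof.
pose best a := [forall b, expu uR nu b <= expu uR nu a].
have bestP a : reflect (Astar uR nu a) (best a) by exact: forallP.
have [amax _ amax_max] := arg_maxP (expu uR nu) (isT : predT a0).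
have best_amax : best amax by apply/bestP => b; exact: amax_max.
have [a /bestP a_best a_min] := arg_minP (expu uS nu) best_amax.
have a_min' b : Astar uR nu b -> expu uS nu a <= expu uS nu b by move/bestP; exact: a_min.
exists a; split=> //; apply: inf_eq_min; first by exists a.
by move=> _ [b [/a_min' b_best ->]].
Qed.

End OptimalReceiverAction.

Section UselessChannel.
Variables (R : realType) (Om A X Y : finType) (uS uR : Om -> A -> R)
  (Q : X -> Y -> R) (q : Y -> R) (mu : Om -> R) (n k : nat).
Hypotheses (mu_dist : is_dist mu) (q_dist : is_dist q)
  (Q_const : forall x y, Q x y = q y) (n_gt0 : (0 < n)%N).

Definition qk (y : {ffun 'I_k -> Y}) : R := \prod_t q (y t).

Definition mean_payoff (u : Om -> A -> R) (a : {ffun 'I_n -> A}) : R :=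
  n%:R^-1 * \sum_t expu u mu (a t).

Lemma qk_ge0 y : 0 <= qk y.
Proof. by apply: prodr_ge0 => t _; case: q_dist. Qed.

Lemma sum_qk : \sum_y qk y = 1.
Proof. by apply: sum_prod_ffun; case: q_dist. Qed.

Lemma sum_mun_ubar u a : \sum_w mun mu w * ubar u w a = mean_payoff u a.
Proof.
rewrite /ubar /mean_payoff.
under eq_bigr do rewrite mulrCA mulr_sumr.
rewrite -mulr_sumr exchange_big /=; congr (_ * _); apply: eq_bigr => t _.
exact: (sum_prod_ffun_coord (proj2 mu_dist) t (fun o => u o (a t))).
Qed.

Lemma mean_payoff_const u a : mean_payoff u [ffun _ => a] = expu u mu a.
Proof.
rewrite /mean_payoff; under eq_bigr do rewrite ffunE.
by rewrite sumr_const card_ord -[expu _ _ _ *+ _]mulr_natl mulKf // pnatr_eq0 -lt0n.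
Qed.

Section SenderStrategy.
Variable sigma : {ffun 'I_n -> Om} -> {ffun 'I_k -> X} -> R.
Hypothesis sigma_strategy : sender_strategy sigma.

Lemma sum_strategy_Qk w y : \sum_x sigma w x * Qk Q x y = qk y.
Proof.
have Qk_qk x : Qk Q x y = qk y by apply: eq_bigr => t _; rewrite Q_const.
under eq_bigr do rewrite Qk_qk.
by rewrite -mulr_suml; case: (sigma_strategy w) => _ ->; rewrite mul1r.
Qed.

Lemma recv_objE y a : recv_obj uR Q mu sigma y a = qk y * mean_payoff uR a.
Proof.
rewrite /recv_obj -sum_mun_ubar mulr_sumr; apply: eq_bigr => w _.
rewrite -(sum_strategy_Qk w y) !mulr_suml; apply: eq_bigr => x _; ring.
Qed.

Lemma sender_payoffE tau :
  sender_payoff uS Q mu sigma tau = \sum_y qk y * mean_payoff uS (tau y).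
Proof.
rewrite /sender_payoff; under eq_bigr do rewrite exchange_big /=.
rewrite exchange_big /=; apply: eq_bigr => y _.
rewrite -sum_mun_ubar mulr_sumr; apply: eq_bigr => w _.
rewrite -(sum_strategy_Qk w y) !mulr_suml; apply: eq_bigr => x _; ring.
Qed.

Lemma BR_Astar tau y t :
  BR uR Q mu sigma tau -> 0 < qk y -> Astar uR mu (tau y t).
Proof.
move=> tau_BR qk_gt0 b.
pose a' := [ffun s => if s == t then b else tau y s].
have := tau_BR y a'.
rewrite !recv_objE ler_pM2l // /mean_payoff ler_pM2l ?invr_gt0 ?ltr0n //.
rewrite (bigD1 t) //= [leRHS](bigD1 t) //= ffunE eqxx.
rewrite (eq_bigr (fun s => expu uR mu (tau y s))) ?lerD2r // => s /negbTE s_neq_t.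
by rewrite ffunE s_neq_t.
Qed.

Lemma BR_const a : Astar uR mu a -> BR uR Q mu sigma (fun _ => [ffun _ => a]).
Proof.
move=> a_best y a'; rewrite !recv_objE ler_wpM2l ?qk_ge0 // /mean_payoff.
by rewrite ler_wpM2l ?invr_ge0 ?ler0n // ler_sum // => t _; rewrite ffunE.
Qed.

Lemma best_response_payoff (a0 : A) :
  inf [set z | exists tau, BR uR Q mu sigma tau /\ z = sender_payoff uS Q mu sigma tau]
  = uSstar uS uR mu.
Proof.
have [a [a_best a_min ->]] := uSstar_attained uS uR a0 mu.
apply: inf_eq_min.
  exists (fun _ => [ffun _ => a]); split; first exact: BR_const.
  rewrite sender_payoffE; under eq_bigr do rewrite mean_payoff_const.
  by rewrite -mulr_suml sum_qk mul1r.
move=> _ [tau [tau_BR ->]]; rewrite sender_payoffE.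
rewrite -[leLHS]mul1r -sum_qk mulr_suml ler_sum // => y _.
have := qk_ge0 y; rewrite le_eqVlt => /predU1P[<-|qk_gt0]; first by rewrite !mul0r.
rewrite ler_pM2l // -(mean_payoff_const uS a) /mean_payoff ler_pM2l ?invr_gt0 ?ltr0n //.
by rewrite ler_sum // => t _; rewrite ffunE; apply/a_min/BR_Astar.
Qed.

End SenderStrategy.

Lemma UstarS_useless_channel (a0 : A) (x0 : X) :
  UstarS uS uR Q mu n k = uSstar uS uR mu.
Proof.
rewrite /UstarS [X in sup X](_ : _ = [set uSstar uS uR mu]) ?sup1 //.
apply/seteqP; split=> [_ [sigma [sigma_strategy ->]]|_ ->] /=.
  exact: best_response_payoff.
pose sigma0 (w : {ffun 'I_n -> Om}) (x : {ffun 'I_k -> X}) : R :=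
  (x == [ffun _ => x0])%:R.
have sigma0_strategy : sender_strategy sigma0.
  by move=> w; split=> [x|]; rewrite ?ler0n ?sum_indicator1.
by exists sigma0; split=> //; rewrite best_response_payoff.
Qed.

End UselessChannel.

Theorem lemma2 (R : realType) (Om A X Y : finType) (a0 : A) (x0 : X)
    (mu : Om -> R) (uS uR : Om -> A -> R) (Q : X -> Y -> R)
    (hmu : is_dist mu) (hQ : forall x, is_dist (Q x))
    (hC : capacity Q = 0) (n k : nat) (hn : (0 < n)%N) (hk : (0 < k)%N) :
  UstarS uS uR Q mu n k = Vval uS uR mu (k%:R / n%:R * capacity Q) /\
  Vval uS uR mu (k%:R / n%:R * capacity Q) = uSstar uS uR mu.
Proof.
have Q_const x y : Q x y = Q x0 y by exact: capacity_eq0_const hQ hC x x0 y.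
rewrite hC mulr0 Vval0 //; split=> //.
exact: UstarS_useless_channel hmu (hQ x0) Q_const hn a0 x0.
Qed.
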